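(* For every $\varepsilon > 0$, there exists a set of squares of total area $\frac{8}{5} + \varepsilon$ that cannot be packed into the unit disk (the disk of radius $1$).
   Context: A packing of a set of squares into a container is a placement of congruent copies of the squares (translations and rotations allowed) inside the container such that the interiors of any two placed squares are disjoint. *)

From Stdlib Require Import Reals List.
Open Scope R_scope.

(* The closed square of side s, centred at (cx, cy), rotated by angle t:
   points whose coordinates in the rotated frame (cos t, sin t), (-sin t, cos t)
   relative to the centre are at most s/2 in absolute value. *)
Definition in_square (s cx cy t x y : R) : Prop :=
  Rabs ((x - cx) * cos t + (y - cy) * sin t) <= s / 2 /\
  Rabs (- (x - cx) * sin t + (y - cy) * cos t) <= s / 2.

Definition in_square_interior (s cx cy t x y : R) : Prop :=
  Rabs ((x - cx) * cos t + (y - cy) * sin t) < s / 2 /\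
  Rabs (- (x - cx) * sin t + (y - cy) * cos t) < s / 2.

Definition in_unit_disk (x y : R) : Prop := x ^ 2 + y ^ 2 <= 1.

(* A packing of the squares with side lengths l (a finite multiset, given as a
   list) into the unit disk: a placement (centre and rotation angle) of each
   square such that every placed square lies in the disk and the interiors of
   any two distinct placed squares are disjoint. *)
Definition packable_in_unit_disk (l : list R) : Prop :=
  exists (cx cy t : nat -> R),
    (forall i, (i < length l)%nat -> forall x y,
        in_square (nth i l 0) (cx i) (cy i) (t i) x y -> in_unit_disk x y) /\
    (forall i j, (i < length l)%nat -> (j < length l)%nat -> i <> j ->
       forall x y,
         ~ (in_square_interior (nth i l 0) (cx i) (cy i) (t i) x y /\
            in_square_interior (nth j l 0) (cx j) (cy j) (t j) x y)).

Definition total_area (l : list R) : R :=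
  fold_right (fun s acc => s ^ 2 + acc) 0 l.

From Stdlib Require Import Reals List Lra Psatz.
Open Scope R_scope.

(* Take two squares of side s with s^2 = 4/5 + eps/2.  A square contains the
   open disk of radius s/2 about its centre in its interior, so in a packing
   the two centres are at distance at least s, and by the parallelogram law one
   of them is at distance at least s/2 from the origin.  The corner of that
   square farthest from the origin is then at squared distance at least
   (s/2 + s/2)^2 + (s/2)^2 = 5 s^2 / 4 > 1. *)

Lemma rotation_preserves_norm (u v t : R) :
  (u * cos t + v * sin t) ^ 2 + (- u * sin t + v * cos t) ^ 2 = u ^ 2 + v ^ 2.
Proof.
  pose proof (sin2_cos2 t) as H; unfold Rsqr in H.
  apply Rminus_diag_uniq.
  transitivity ((u ^ 2 + v ^ 2) * (sin t * sin t + cos t * cos t - 1));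
    [ring | rewrite H; ring].
Qed.

Lemma frame_point_coords (cx cy t u v : R) :
  (cx + u * cos t - v * sin t - cx) * cos t
    + (cy + u * sin t + v * cos t - cy) * sin t = u /\
  - (cx + u * cos t - v * sin t - cx) * sin t
    + (cy + u * sin t + v * cos t - cy) * cos t = v.
Proof.
  pose proof (sin2_cos2 t) as H; unfold Rsqr in H.
  split; apply Rminus_diag_uniq.
  - transitivity (u * (sin t * sin t + cos t * cos t - 1)); [ring | rewrite H; ring].
  - transitivity (v * (sin t * sin t + cos t * cos t - 1)); [ring | rewrite H; ring].
Qed.

Lemma frame_point_norm (cx cy t u v : R) :
  (cx + u * cos t - v * sin t) ^ 2 + (cy + u * sin t + v * cos t) ^ 2 =
  cx ^ 2 + cy ^ 2
    + 2 * (u * (cx * cos t + cy * sin t) + v * (- cx * sin t + cy * cos t))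
    + u ^ 2 + v ^ 2.
Proof.
  pose proof (sin2_cos2 t) as H; unfold Rsqr in H.
  apply Rminus_diag_uniq.
  transitivity ((u ^ 2 + v ^ 2) * (sin t * sin t + cos t * cos t - 1));
    [ring | rewrite H; ring].
Qed.

Lemma in_square_frame_point (s cx cy t u v : R) :
  Rabs u <= s / 2 -> Rabs v <= s / 2 ->
  in_square s cx cy t (cx + u * cos t - v * sin t) (cy + u * sin t + v * cos t).
Proof.
  intros Hu Hv; unfold in_square.
  destruct (frame_point_coords cx cy t u v) as [-> ->]; auto.
Qed.

Lemma in_square_interior_of_near_centre (s cx cy t x y : R) :
  0 < s -> (x - cx) ^ 2 + (y - cy) ^ 2 < (s / 2) ^ 2 ->
  in_square_interior s cx cy t x y.
Proof.
  intros Hs Hnear.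
  rewrite <- (rotation_preserves_norm _ _ t) in Hnear.
  unfold in_square_interior; rewrite <- (Rabs_right (s / 2)) by lra.
  pose proof (pow2_ge_0 ((x - cx) * cos t + (y - cy) * sin t)).
  pose proof (pow2_ge_0 (- (x - cx) * sin t + (y - cy) * cos t)).
  split; apply Rsqr_lt_abs_0; unfold Rsqr; lra.
Qed.

Lemma disjoint_congruent_squares_centres_far (s cx1 cy1 t1 cx2 cy2 t2 : R) :
  0 < s ->
  (forall x y, ~ (in_square_interior s cx1 cy1 t1 x y /\
                  in_square_interior s cx2 cy2 t2 x y)) ->
  s ^ 2 <= (cx1 - cx2) ^ 2 + (cy1 - cy2) ^ 2.
Proof.
  intros Hs Hdisj.
  apply Rnot_lt_le; intros Hclose.
  apply (Hdisj ((cx1 + cx2) / 2) ((cy1 + cy2) / 2)).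
  split; apply in_square_interior_of_near_centre; nra.
Qed.

Lemma far_apart_points_one_far_from_origin (a1 b1 a2 b2 r : R) :
  (2 * r) ^ 2 <= (a1 - a2) ^ 2 + (b1 - b2) ^ 2 ->
  r ^ 2 <= a1 ^ 2 + b1 ^ 2 \/ r ^ 2 <= a2 ^ 2 + b2 ^ 2.
Proof.
  intros Hfar.
  destruct (Rle_dec (r ^ 2) (a1 ^ 2 + b1 ^ 2)) as [| Hnear]; [left; assumption | right].
  apply Rnot_le_lt in Hnear.
  pose proof (pow2_ge_0 (a1 + a2)); pose proof (pow2_ge_0 (b1 + b2)); lra.
Qed.

Lemma sign_exists (p : R) : exists e, Rabs e = 1 /\ e * p = Rabs p.
Proof.
  destruct (Rle_dec 0 p).
  - exists 1; rewrite Rabs_R1, Rabs_right; lra.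
  - exists (-1); split; [rewrite Rabs_left | rewrite (Rabs_left p)]; lra.
Qed.

(* The witness is the corner reached from the centre by moving, along each axis
   of the square, away from the origin. *)
Lemma square_has_far_point (s cx cy t r : R) :
  0 <= s -> 0 <= r -> r ^ 2 <= cx ^ 2 + cy ^ 2 ->
  exists x y, in_square s cx cy t x y /\
              (r + s / 2) ^ 2 + (s / 2) ^ 2 <= x ^ 2 + y ^ 2.
Proof.
  intros Hs Hr Hc.
  set (p := cx * cos t + cy * sin t).
  set (q := - cx * sin t + cy * cos t).
  destruct (sign_exists p) as (e & He & Hep).
  destruct (sign_exists q) as (d & Hd & Hdq).
  exists (cx + s / 2 * e * cos t - s / 2 * d * sin t),
         (cy + s / 2 * e * sin t + s / 2 * d * cos t).
  assert (Habs : forall f, Rabs f = 1 -> Rabs (s / 2 * f) = s / 2).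
  { intros f Hf; rewrite Rabs_mult, Hf, Rabs_right; lra. }
  split; [apply in_square_frame_point; rewrite Habs; lra |].
  rewrite frame_point_norm; fold p q.
  assert (Hpq : r <= Rabs p + Rabs q).
  { pose proof (rotation_preserves_norm cx cy t) as Hnorm; fold p q in Hnorm.
    rewrite <- (pow2_abs p), <- (pow2_abs q) in Hnorm.
    pose proof (Rabs_pos p); pose proof (Rabs_pos q); nra. }
  rewrite <- (pow2_abs (s / 2 * e)), <- (pow2_abs (s / 2 * d)), !Habs by assumption.
  replace (s / 2 * e * p) with (s / 2 * Rabs p) by (rewrite <- Hep; ring).
  replace (s / 2 * d * q) with (s / 2 * Rabs q) by (rewrite <- Hdq; ring).
  nra.
Qed.

Lemma square_off_centre_not_in_unit_disk (s cx cy t : R) :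
  0 <= s -> 1 < 5 * s ^ 2 / 4 -> (s / 2) ^ 2 <= cx ^ 2 + cy ^ 2 ->
  ~ (forall x y, in_square s cx cy t x y -> in_unit_disk x y).
Proof.
  intros Hs Hbig Hc Hin.
  destruct (square_has_far_point s cx cy t (s / 2)) as (x & y & Hsq & Hfar);
    try lra.
  specialize (Hin x y Hsq); unfold in_unit_disk in Hin; lra.
Qed.

Lemma two_congruent_squares_not_packable (s : R) :
  0 < s -> 1 < 5 * s ^ 2 / 4 -> ~ packable_in_unit_disk (s :: s :: nil).
Proof.
  intros Hs Hbig (cx & cy & t & Hin & Hdisj).
  assert (Hfar := disjoint_congruent_squares_centres_far s
                    (cx 0%nat) (cy 0%nat) (t 0%nat) (cx 1%nat) (cy 1%nat) (t 1%nat)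
                    Hs (Hdisj 0%nat 1%nat ltac:(simpl; lia) ltac:(simpl; lia) ltac:(lia))).
  destruct (far_apart_points_one_far_from_origin
              (cx 0%nat) (cy 0%nat) (cx 1%nat) (cy 1%nat) (s / 2)) as [H0 | H1];
    [replace (2 * (s / 2)) with s by field; exact Hfar | |].
  - exact (square_off_centre_not_in_unit_disk s _ _ _ ltac:(lra) Hbig H0
             (Hin 0%nat ltac:(simpl; lia))).
  - exact (square_off_centre_not_in_unit_disk s _ _ _ ltac:(lra) Hbig H1
             (Hin 1%nat ltac:(simpl; lia))).
Qed.

Theorem lemma2 : forall eps : R, 0 < eps ->
  exists l : list R,
    Forall (fun s => 0 < s) l /\
    total_area l = 8 / 5 + eps /\
    ~ packable_in_unit_disk l.
Proof.
  intros eps Heps.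
  set (s := sqrt (4 / 5 + eps / 2)).
  assert (Hs2 : s ^ 2 = 4 / 5 + eps / 2) by (apply pow2_sqrt; lra).
  assert (Hs : 0 < s) by (apply sqrt_lt_R0; lra).
  exists (s :: s :: nil); split; [| split].
  - repeat constructor; assumption.
  - cbn [total_area fold_right]; lra.
  - apply two_congruent_squares_not_packable; lra.
Qed.
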